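(* Let $q \equiv 1 \pmod{14}$ be a prime power, let $\rho$ be a primitive element of $\mathbb F_q$, and let $g,h \in (\mathbb Z_2^3)^*$ with $g\neq h$. Then (i) $c^7_q\big(\Psi_1(h-g)-\Psi_1(g),\ \Psi_1(h)-\Psi_1(g)\big) = c^7_q(1,5)$; (ii) $c^7_q\big(\Psi_2(h-g)-\Psi_2(g),\ \Psi_2(h)-\Psi_2(g)\big) = c^7_q(1,3)$.
   Context: $(\mathbb Z_2^3)^* = \mathbb Z_2^3\setminus\{0\}$; elements are written $(x_2,x_1,x_0)$ and $\hat x\in\{0,1\}$ denotes the integer representative of $x\in\mathbb Z_2$. Define $\phi(x_2,x_1,x_0) = \hat x_0 + 2\hat x_1 + 4\hat x_2 \pmod 7$, $\operatorname{wt}(x_2,x_1,x_0) = \hat x_0+\hat x_1+\hat x_2$, $\sigma_+(x_2,x_1,x_0) = (x_1,x_0,x_2)$, $\sigma_-(x_2,x_1,x_0) = (x_0,x_2,x_1)$. Define $\Psi_1,\Psi_2 : (\mathbb Z_2^3)^* \to \mathbb Z_7$ by $\Psi_1(\mathbf x) = \phi(\sigma_+(\mathbf x))$ if $\operatorname{wt}(\mathbf x)$ is odd and $\phi(\sigma_-(\mathbf x))$ if even; $\Psi_2(\mathbf x) = \phi(\sigma_+(\mathbf x)+\mathbf x)$ if $\operatorname{wt}(\mathbf x)$ is odd and $\phi((1,1,1)+\mathbf x)$ if even. Cyclotomic numbers: write $q = 14r+1$; for $i\in\mathbb Z_7$, $C^7_q(i)=\{\rho^{7j+i}: 0\le j\le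 2r-1\}$, and $c^7_q(a,b)=|(C^7_q(a)+1)\cap C^7_q(b)|$ for $a,b\in\mathbb Z_7$. *)

From HB Require Import structures.
From mathcomp Require Import all_boot all_order all_algebra all_fingroup all_field.
Set Implicit Arguments. Unset Strict Implicit. Unset Printing Implicit Defensive.
Import GRing.Theory.
Local Open Scope ring_scope.

Definition Z23 := ('Z_2 * 'Z_2 * 'Z_2)%type.

Definition z23_zero : Z23 := (0, 0, 0).
Definition z23_add (x y : Z23) : Z23 :=
  let: (x2, x1, x0) := x in let: (y2, y1, y0) := y in (x2 + y2, x1 + y1, x0 + y0).
Definition z23_sub (x y : Z23) : Z23 :=
  let: (x2, x1, x0) := x in let: (y2, y1, y0) := y in (x2 - y2, x1 - y1, x0 - y0).

Definition hat (x : 'Z_2) : nat := nat_of_ord x.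

Definition phi (x : Z23) : 'Z_7 :=
  let: (x2, x1, x0) := x in ((hat x0 + 2 * hat x1 + 4 * hat x2)%N)%:R.

Definition wt (x : Z23) : nat :=
  let: (x2, x1, x0) := x in (hat x0 + hat x1 + hat x2)%N.

Definition sigma_plus (x : Z23) : Z23 := let: (x2, x1, x0) := x in (x1, x0, x2).
Definition sigma_minus (x : Z23) : Z23 := let: (x2, x1, x0) := x in (x0, x2, x1).

Definition Psi1 (x : Z23) : 'Z_7 :=
  if odd (wt x) then phi (sigma_plus x) else phi (sigma_minus x).

Definition Psi2 (x : Z23) : 'Z_7 :=
  if odd (wt x) then phi (z23_add (sigma_plus x) x) else phi (z23_add (1, 1, 1) x).

Definition cycl_r (F : finFieldType) : nat := ((#|F| - 1) %/ 14)%N.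

Definition cycl_class (F : finFieldType) (rho : F) (i : 'Z_7) : {set F} :=
  [set x : F | [exists j : 'I_(2 * cycl_r F), x == rho ^+ (7 * j + i)]].

Definition cycl_num (F : finFieldType) (rho : F) (a b : 'Z_7) : nat :=
  #| [set y + 1 | y in cycl_class rho a] :&: cycl_class rho b |.

(* The cyclotomic numbers of order 7 satisfy c(a, b) = c(b, a) and
   c(a, b) = c(-a, b - a): the first comes from z |-> 1 - z, which needs -1 to
   be a seventh power, i.e. q = 1 mod 14; the second from z |-> z / (z - 1).
   These two involutions generate an action of S_3 on pairs of indices, and a
   finite check shows that for all admissible g, h the pair of indices in (i)
   lies in the orbit of (1, 5) and that in (ii) lies in the orbit of (1, 3). *)
Set Warnings "-notation-overridden,-ambiguous-paths".
From HB Require Import structures.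
From mathcomp Require Import all_boot all_order all_algebra all_fingroup all_field.
From mathcomp Require Import zify.
Import GRing.Theory.
Local Open Scope ring_scope.

Lemma mem_imset_add1 (R : finNzRingType) (A : {set R}) z :
  (z \in [set y + 1 | y in A]) = (z - 1 \in A).
Proof.
apply/imsetP/idP => [[y yA ->]|zA]; first by rewrite addrK.
by exists (z - 1); rewrite ?subrK.
Qed.

Definition cycl_orbit (p : 'Z_7 * 'Z_7) : seq ('Z_7 * 'Z_7) :=
  let: (a, b) := p in
  [:: (a, b); (b, a); (- a, b - a); (b - a, - a); (- b, a - b); (a - b, - b)].

Section CyclotomicClasses.

Variables (F : finFieldType) (rho : F).
Hypothesis card_F_mod14 : (#|F| %% 14 = 1)%N.
Hypothesis rho_prim : (#|F|.-1).-primitive_root rho.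

Local Notation n := #|F|.-1.
Local Notation C := (cycl_class rho).
Local Notation c := (cycl_num rho).

Lemma card_F_pred : n = (14 * cycl_r F)%N.
Proof. have := prim_order_gt0 rho_prim; rewrite /cycl_r; lia. Qed.

Lemma modn_card_F_pred7 k : ((k %% n) %% 7 = k %% 7)%N.
Proof. by apply: modn_dvdm; rewrite card_F_pred dvdn_mulr. Qed.

Lemma cycl_classP x (i : 'Z_7) :
  reflect (exists k, x = rho ^+ k /\ (k %% 7 = i)%N) (x \in C i).
Proof.
rewrite inE; apply: (iffP existsP) => [[j /eqP ->]|[k [-> ki]]].
  by exists (7 * j + i)%N; split => //; have : (i < 7)%N := ltn_ord i; lia.
have k_lt : (k %% n < 14 * cycl_r F)%N.
  by rewrite -card_F_pred ltn_pmod ?(prim_order_gt0 rho_prim).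
rewrite -(prim_expr_mod rho_prim k); have := modn_card_F_pred7 k.
move: (k %% n)%N k_lt => m m_lt m7.
have j_lt : (m %/ 7 < 2 * cycl_r F)%N by lia.
exists (Ordinal j_lt); apply/eqP; congr (_ ^+ _) => /=; lia.
Qed.

Lemma rho_neq0 : rho != 0.
Proof.
apply/eqP => rho0; have := prim_expr_order rho_prim.
rewrite rho0 expr0n eqn0Ngt (prim_order_gt0 rho_prim) => /eqP.
by rewrite eq_sym oner_eq0.
Qed.

Lemma cycl_class_neq0 x i : x \in C i -> x != 0.
Proof. by case/cycl_classP => k [-> _]; rewrite expf_neq0 ?rho_neq0. Qed.

Lemma cycl_classM x y a b : x \in C a -> y \in C b -> x * y \in C (a + b).
Proof.
case/cycl_classP => k [-> ka] /cycl_classP [l [-> lb]].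
apply/cycl_classP; exists (k + l)%N; rewrite exprD; split => //.
by have -> : nat_of_ord (a + b) = ((a + b) %% 7)%N by []; lia.
Qed.

Lemma cycl_classV x a : x \in C a -> x^-1 \in C (- a).
Proof.
case/cycl_classP => k [-> ka]; apply/cycl_classP.
exists (n - k %% n)%N; split.
  apply: mulr1_eq; rewrite -(prim_expr_mod rho_prim k) -exprD subnKC.
    exact: prim_expr_order.
  by rewrite ltnW // ltn_pmod ?(prim_order_gt0 rho_prim).
have -> : nat_of_ord (- a) = ((7 - a) %% 7)%N by [].
have : (a < 7)%N := ltn_ord a; have := modn_card_F_pred7 k.
have := ltn_pmod k (prim_order_gt0 rho_prim).
by move: (k %% n)%N => m; rewrite card_F_pred; lia.
Qed.

(* -1 = rho ^+ (q - 1)./2, and 7 divides (q - 1)./2 because 14 divides q - 1. *)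
Lemma cycl_class0_N1 : -1 \in C 0.
Proof.
apply/cycl_classP; exists (7 * cycl_r F)%N; split; last by rewrite modnMr.
set y := rho ^+ _.
have : y ^+ 2 = 1 by rewrite -exprM mulnC mulnA -card_F_pred prim_expr_order.
move/eqP; rewrite sqrf_eq1 => /orP [/eqP y1|/eqP -> //].
have := prim_order_dvd rho_prim (7 * cycl_r F); rewrite -/y y1 eqxx.
move/dvdn_leq; have := prim_order_gt0 rho_prim; rewrite card_F_pred; lia.
Qed.

Lemma cycl_classN x a : x \in C a -> - x \in C a.
Proof. by move=> xa; rewrite -mulN1r -[a]add0r cycl_classM ?cycl_class0_N1. Qed.

Lemma mem_cycl_num_set z a b :
  (z \in [set y + 1 | y in C a] :&: C b) = (z - 1 \in C a) && (z \in C b).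
Proof. by rewrite inE mem_imset_add1. Qed.

Lemma leq_cycl_numC a b : (c a b <= c b a)%N.
Proof.
have oneB_inj : injective (fun z : F => 1 - z) by apply: can_inj (subKr 1).
rewrite /cycl_num -(card_imset _ oneB_inj); apply/subset_leq_card/subsetP.
move=> w /imsetP [z]; rewrite mem_cycl_num_set => /andP [za zb] ->.
by rewrite mem_cycl_num_set addrC addKr -opprB !cycl_classN.
Qed.

Lemma cycl_numC a b : c a b = c b a.
Proof. by apply/anti_leq; rewrite !leq_cycl_numC. Qed.

(* z |-> 1 + (z - 1)^-1 = z / (z - 1) is an involution. *)
Lemma leq_cycl_num_shear a b : (c a b <= c (- a)%R (b - a)%R)%N.
Proof.
have shear_inj : injective (fun z : F => 1 + (z - 1)^-1).
  by move=> z w /addrI /invr_inj /addIr.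
rewrite /cycl_num -(card_imset _ shear_inj); apply/subset_leq_card/subsetP.
move=> w /imsetP [z]; rewrite mem_cycl_num_set => /andP [za zb] ->.
rewrite mem_cycl_num_set [1 + _]addrC addrK cycl_classV //=.
have -> : (z - 1)^-1 + 1 = z * (z - 1)^-1.
  have z1_neq0 : z - 1 != 0 by apply: cycl_class_neq0 za.
  by rewrite -[X in X * _](subrK 1 z) mulrDl mulfV // mul1r addrC.
by rewrite cycl_classM ?cycl_classV.
Qed.

Lemma cycl_num_shear a b : c a b = c (- a) (b - a).
Proof.
apply/anti_leq; rewrite leq_cycl_num_shear /=.
by have := leq_cycl_num_shear (- a) (b - a); rewrite opprK subrK.
Qed.

Lemma cycl_num_orbit p p' : p' \in cycl_orbit p -> c p'.1 p'.2 = c p.1 p.2.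
Proof.
case: p => a b; rewrite !inE => /or3P [||/or4P []] /eqP -> //=.
- by rewrite cycl_numC.
- by rewrite -cycl_num_shear.
- by rewrite cycl_numC -cycl_num_shear.
- by rewrite -cycl_num_shear cycl_numC.
- by rewrite cycl_numC -cycl_num_shear cycl_numC.
Qed.

End CyclotomicClasses.

Definition Psi_pair (Psi : Z23 -> 'Z_7) (g h : Z23) : 'Z_7 * 'Z_7 :=
  (Psi (z23_sub h g) - Psi g, Psi h - Psi g).

Lemma Zp2_cases (x : 'Z_2) : x = 0 \/ x = 1.
Proof. by case: x => [[|[|n]] x_lt]; [left; apply/val_inj | right; apply/val_inj |]. Qed.

Lemma Psi_pairs_in_orbit {g h : Z23} :
  g != z23_zero -> h != z23_zero -> g != h ->
  (Psi_pair Psi1 g h \in cycl_orbit (1, 5)) &&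
  (Psi_pair Psi2 g h \in cycl_orbit (1, 3)).
Proof.
case: g h => [[a b] c] [[d e] f].
by case: (Zp2_cases a) => ->; case: (Zp2_cases b) => ->;
  case: (Zp2_cases c) => ->; case: (Zp2_cases d) => ->;
  case: (Zp2_cases e) => ->; case: (Zp2_cases f) => ->; vm_compute.
Qed.

Theorem proposition3p2 (F : finFieldType) (rho : F) (g h : Z23) :
  (#|F| %% 14 = 1)%N ->
  (#|F|.-1).-primitive_root rho ->
  g != z23_zero -> h != z23_zero -> g != h ->
  cycl_num rho (Psi1 (z23_sub h g) - Psi1 g) (Psi1 h - Psi1 g) = cycl_num rho 1 5
  /\
  cycl_num rho (Psi2 (z23_sub h g) - Psi2 g) (Psi2 h - Psi2 g) = cycl_num rho 1 3.
Proof.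
move=> card_F_mod14 rho_prim g0 h0 gh.
have /andP [orbit1 orbit2] := Psi_pairs_in_orbit g0 h0 gh.
by split; [exact: cycl_num_orbit orbit1 | exact: cycl_num_orbit orbit2].
Qed.
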